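(* Let $1\le D\le n-1$ and $1\le x\le D$. There is no deterministic consensus algorithm for $n$ processes (even one that knows $n$, $D$ and $x$) that solves consensus under the message adversary $\lozenge\mathrm{STABLE}_D(x)$. This remains true even for the smaller message adversary consisting of those sequences in $\lozenge\mathrm{STABLE}_D(x)$ whose first $D$ graphs $\mathcal{G}^1,\dots,\mathcal{G}^D$ form an $R$-rooted sequence for some set $R\subseteq\Pi$, where $R$ is not known to the processes a priori.
   Context: Model: a finite set $\Pi$ of $n$ processes with unique identifiers, which never fail and run in lock-step synchronous rounds $r=1,2,\dots$; in each round every process sends a message to every other process, receives some of them, and makes a local state transition. The round-$r$ communication graph $\mathcal{G}^r$ is a directed graph on $\Pi$ with edge $(p\to q)$ iff $q$ receives $p$'s round-$r$ message; all self-loops are always present. A message adversary is a set of infinite sequences of communication graphs (the admissible sequences); an algorithm solves consensus under a message adversary if for every assignment of inputs and every admissible sequence the run satisfies: Termination (every process eventually irrevocably decides), Agreement (all decisions are equal), Validity (every decision is some process's input). A root component of a graph $\mathcal{G}$ is a nonempty $R\subseteq\Pi$ that is the vertex set of a strongly connected component of $\mathcal{G}$ with no edge $(p\to q)$, $q\in R$, $p\notin R$. A graph is rooted if it has exactly one root component $\operatorname{Root}(\mathcal{G})$. A nonempty sequence of consecutive graphs is $R$-rooted if each graph in it is rooted with root component $R$. Compound graph: $(p,q)\in\mathcal{G}\circ\mathcal{G}'$ iff $(p,p')\in\mathcal{G}$ and $(p',q)\in\mathcal{G}'$ for some $p'$. Causal past: $\mathrm{CP}_p(a,a)=\{p\}$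 and, for $a<b$, $\mathrm{CP}_p(a,b)$ is the set of in-neighbours of $p$ in $\mathcal{G}^{a+1}\circ\cdots\circ\mathcal{G}^b$. $\mathrm{DIAM}(D)$: all sequences such that for every subsequence $\mathcal{G}^{r_1},\dots,\mathcal{G}^{r_1+D-1}$ of $D$ consecutive graphs that is $R$-rooted, $R\subseteq \mathrm{CP}_p(r_1-1,r_1+D-1)$ for every $p\in\Pi$. $\lozenge\mathrm{STABILITY}(x)$: all sequences containing, for some $R\subseteq\Pi$, an $R$-rooted subsequence of at least $x$ consecutive graphs. $\mathrm{ROOTED}$: all sequences in which every graph is rooted. $\lozenge\mathrm{STABLE}_D(x)=\mathrm{ROOTED}\cap\lozenge\mathrm{STABILITY}(x)\cap\mathrm{DIAM}(D)$. *)

From mathcomp Require Import all_boot.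
Set Implicit Arguments. Unset Strict Implicit. Unset Printing Implicit Defensive.

Section Model.
Variable n : nat.
Notation proc := 'I_n.

(* A communication graph: [G p q] iff (p -> q), i.e. q receives p's message. *)
Definition graph := rel proc.
(* A graph sequence; round r (r >= 1) uses graph [g r]; [g 0] is unused. *)
Definition gseq := nat -> graph.

Definition isRootComp (G : graph) (R : {set proc}) : Prop :=
  (exists p, R = [set q | connect G p q && connect G q p]) /\
  (forall u v, G u v -> v \in R -> u \in R).

Definition rootedWith (G : graph) (R : {set proc}) : Prop :=
  isRootComp G R /\ forall R', isRootComp G R' -> R' = R.

Definition rooted (G : graph) : Prop := exists R, rootedWith G R.

Definition rootedBlock (g : gseq) (R : {set proc}) (a len : nat) : Prop :=
  0 < len /\ forall i, i < len -> rootedWith (g (a + i)) R.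

Fixpoint compound (g : gseq) (a k : nat) : rel proc :=
  match k with
  | 0 => fun u v => u == v
  | k'.+1 => fun u v => [exists w, compound g a k' u w && g (a + k'.+1) w v]
  end.

(* causal past CP_p(a,b), for a <= b *)
Definition CP (g : gseq) (p : proc) (a b : nat) : {set proc} :=
  [set q | compound g a (b - a) q p].

Definition selfLoops (g : gseq) : Prop := forall r p, 1 <= r -> g r p p.

Definition DIAM (D : nat) (g : gseq) : Prop :=
  forall r1 R, 1 <= r1 -> rootedBlock g R r1 D ->
    forall p, R \subset CP g p (r1 - 1) (r1 + D - 1).

Definition EvStability (x : nat) (g : gseq) : Prop :=
  exists R r k, 1 <= r /\ x <= k /\ rootedBlock g R r k.

Definition ROOTED (g : gseq) : Prop := forall r, 1 <= r -> rooted (g r).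

Definition EvSTABLE (D x : nat) (g : gseq) : Prop :=
  selfLoops g /\ ROOTED g /\ EvStability x g /\ DIAM D g.

Definition EvSTABLE_first (D x : nat) (g : gseq) : Prop :=
  EvSTABLE D x g /\ exists R, rootedBlock g R 1 D.

Record algorithm (V S M : Type) := Algorithm {
  init : proc -> V -> S;
  send : proc -> S -> proc -> M;                (* sender, state, recipient *)
  trans : proc -> S -> (proc -> option M) -> S;  (* None = not received *)
  dec : proc -> S -> option V                    (* current output *)
}.

Section Run.
Variables (V S M : Type) (A : algorithm V S M) (inp : proc -> V) (g : gseq).

Fixpoint state (r : nat) : proc -> S :=
  match r with
  | 0 => fun p => init A p (inp p)
  | r'.+1 => fun p =>
      trans A p (state r' p)
        (fun q => if g r q p then Some (send A q (state r' q) p) else None)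
  end.

(* p (irrevocably) decides v: the first output of p is v *)
Definition decides (p : proc) (v : V) : Prop :=
  exists r, dec A p (state r p) = Some v /\
            forall r', r' < r -> dec A p (state r' p) = None.

Definition consensus_run : Prop :=
  (forall p, exists v, decides p v) /\
  (forall p q v w, decides p v -> decides q w -> v = w) /\
  (forall p v, decides p v -> exists q, inp q = v).
End Run.

Definition solves_consensus (V S M : Type) (A : algorithm V S M)
    (MA : gseq -> Prop) : Prop :=
  forall (inp : proc -> V) (g : gseq), MA g -> consensus_run A inp g.

End Model.

From mathcomp Require Import all_boot zify.
From Stdlib Require Import Classical ClassicalEpsilon FunctionalExtensionality.
Set Implicit Arguments. Unset Strict Implicit. Unset Printing Implicit Defensive.

(* The runs used start with D rounds of one of three graphs on the path 0 - 1 - ... - D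
   (rooted at 0, at the whole path, or at D), followed by stars centred at 0, at D, or at
   both; all of them are admissible, with a rooted first block.  Along these runs the
   decision of process 0 is a locally constant function of the sequence of stars.  The
   double star looks like the star at 0 to D and like the star at D to 0, so isolating
   that process afterwards shows that a prefix of stars is univalent whenever all its
   one-star extensions are; a Koenig-style descent then makes the decision independent of
   the stars.  But runs differing in one missing edge of the first block, or in the input
   of an isolated process, form a chain from the all-v0 run to the all-v1 run. *)

Section RootComponents.
Variable n : nat.
Implicit Types (G : graph n) (R : {set 'I_n}).

Lemma connect_in_closed G R :
  (forall u v, G u v -> v \in R -> u \in R) ->
  forall u v, connect G u v -> v \in R -> u \in R.
Proof.
move=> closed u v /connectP [s Gs ->]; elim: s u Gs => [|w s IHs] u //=.
by case/andP=> Guw /IHs Rw /Rw; apply: closed.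
Qed.

Lemma rootedWith_intro G R p :
  p \in R -> (forall u v, u \in R -> connect G u v) ->
  (forall u v, G u v -> v \in R -> u \in R) -> rootedWith G R.
Proof.
move=> Rp reach closed; have Rconnect := connect_in_closed closed.
split.
  split=> //; exists p; apply/setP => q; rewrite inE.
  apply/idP/andP => [Rq | [_ /Rconnect->//]]; by rewrite !reach.
move=> _ [[p' ->] closed']; have R'connect := connect_in_closed closed'.
have R'p : p \in [set q | connect G p' q && connect G q p'].
  by apply: R'connect (reach p p' Rp) _; rewrite inE connect0.
move: (R'p); rewrite inE => /andP [p'p _].
apply/setP => q; rewrite inE; apply/andP/idP => [[_ qp'] | Rq].
  exact: Rconnect (connect_trans qp' p'p) Rp.
by rewrite (connect_trans p'p (reach _ _ Rp)) reach.
Qed.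

Lemma rootedWith_uniq G R R' : rootedWith G R -> rootedWith G R' -> R' = R.
Proof. by move=> [_ uniqR] [rootR' _]; apply: uniqR. Qed.

Lemma rootedWith1_in G z q : rootedWith G [set z] -> G q z -> q = z.
Proof. by move=> [[_ closed] _] /closed; rewrite !inE eqxx => /(_ isT) /eqP. Qed.

End RootComponents.

Section Compound.
Variables (n : nat) (g : gseq n).
Hypothesis g_refl : forall r p, g r p p.

Lemma compound_refl a k p : compound g a k p p.
Proof. by elim: k => //= k IHk; apply/existsP; exists p; rewrite IHk g_refl. Qed.

Lemma compoundS a k u w v :
  compound g a k u w -> g (a + k.+1) w v -> compound g a k.+1 u v.
Proof. by move=> uw wv /=; apply/existsP; exists w; rewrite uw wv. Qed.

Lemma compound_mono a k K u v : k <= K -> compound g a k u v -> compound g a K u v.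
Proof.
move=> /subnKC <-; elim: (K - k) => [|j IHj] uv; first by rewrite addn0.
by rewrite addnS; apply: compoundS (IHj uv) (g_refl _ _).
Qed.

Lemma compound_walk a (f : nat -> 'I_n) k :
  (forall j, j < k -> g (a + j.+1) (f j) (f j.+1)) -> compound g a k (f 0) (f k).
Proof.
elim: k => [|k IHk] walk /=; first exact: eqxx.
by apply: compoundS (walk k (ltnSn k)); apply: IHk => j /ltnW; apply: walk.
Qed.

Lemma compound_connect (G : graph n) a k u v :
  (forall i x y, 0 < i <= k -> g (a + i) x y -> G x y) ->
  compound g a k u v -> connect G u v.
Proof.
elim: k v => [|k IHk] v sub /=; first by move/eqP->.
case/existsP => w /andP [uw wv]; apply: connect_trans (connect1 (sub _ _ _ _ wv)).
  by apply: IHk uw => i x y /andP [i0 ik]; apply: sub; rewrite i0 leqW.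
by rewrite ltnSn.
Qed.

End Compound.

Section Indistinguishability.
Variables (n : nat) (V S M : Type) (A : algorithm n V S M).
Implicit Types (I : 'I_n -> V) (g : gseq n).

Lemma state_eq_in_cone I I' g g' (P : nat -> pred 'I_n) :
  (forall p, P 0 p -> I p = I' p) ->
  (forall r p, P r.+1 p -> P r p) ->
  (forall r p q, P r.+1 p -> g r.+1 q p = g' r.+1 q p) ->
  (forall r p q, P r.+1 p -> g r.+1 q p -> P r q) ->
  forall r p, P r p -> state A I g r p = state A I' g' r p.
Proof.
move=> P0 Pself Pin Pclosed; elim=> [|r IHr] p Pp /=; first by rewrite P0.
rewrite IHr; last exact: Pself.
congr (trans A p _ _); apply: functional_extensionality => q.
by rewrite -(Pin r p q Pp); case: ifP => // /(Pclosed r p q Pp) /IHr->.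
Qed.

Lemma state_eq_prefix I g g' K :
  (forall r, 0 < r <= K -> g r = g' r) ->
  forall r p, r <= K -> state A I g r p = state A I g' r p.
Proof.
move=> eq_g; apply: (state_eq_in_cone (P := fun r _ => r <= K)) => //.
- by move=> r _ /ltnW.
- by move=> r p q rK; rewrite eq_g.
- by move=> r p q /ltnW.
Qed.

Lemma state_eq_isolated I I' g g' z :
  I z = I' z -> (forall r q, g r.+1 q z = (q == z)) ->
  (forall r q, g' r.+1 q z = (q == z)) ->
  forall r, state A I g r z = state A I' g' r z.
Proof.
move=> Iz gz g'z r; apply: (state_eq_in_cone (P := fun _ p => p == z)) => //.
- by move=> p /eqP ->.
- by move=> r' p q /eqP ->; rewrite gz g'z.
- by move=> r' p q /eqP ->; rewrite gz.
Qed.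

Lemma decides_eq_state I I' g g' z w :
  (forall r, state A I g r z = state A I' g' r z) ->
  decides A I g z w -> decides A I' g' z w.
Proof.
move=> eq_z [r [dec_r before_r]]; exists r; rewrite -eq_z; split=> // r' r'r.
by rewrite -eq_z before_r.
Qed.

End Indistinguishability.

Definition agree {L : Type} k (s s' : nat -> L) := forall i, i < k -> s i = s' i.

Definition extend {L : Type} k (s : nat -> L) t : nat -> L :=
  fun i => if i < k then s i else t.

Lemma agree_extend {L : Type} k (s : nat -> L) t : agree k (extend k s t) s.
Proof. by move=> i ik; rewrite /extend ik. Qed.

Lemma extend_extend_ge {L : Type} k (s : nat -> L) t u i :
  k <= i -> extend k.+1 (extend k s t) u i = if i == k then t else u.
Proof.
move=> ki; rewrite /extend (_ : i < k = false); last lia.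
by case: eqVneq => [-> | ik]; [rewrite ltnSn | rewrite (_ : i < k.+1 = false) //; lia].
Qed.

Section Bivalence.
Variables (L V : Type) (f : (nat -> L) -> V).

Definition univalent k s := forall s1 s2, agree k s1 s -> agree k s2 s -> f s1 = f s2.

Lemma univalent_agree k s s' : agree k s s' -> univalent k s' -> univalent k s.
Proof.
move=> ss' us' s1 s2 s1s s2s.
by apply: us' => i ik; rewrite (s1s, s2s) ?ss'.
Qed.

Hypothesis f_continuous : forall s, exists r, univalent r s.
Hypothesis univalent_children :
  forall k s, (forall t, univalent k.+1 (extend k s t)) -> univalent k s.

Fixpoint bivalent_descent (s : nat -> L) k : nat -> L :=
  if k is k'.+1 then
    let s' := bivalent_descent s k' in
    extend k' s' (epsilon (inhabits (s 0)) (fun t => ~ univalent k'.+1 (extend k' s' t)))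
  else s.

Lemma bivalent_descentP s k :
  ~ univalent 0 s -> ~ univalent k (bivalent_descent s k).
Proof.
move=> biv0; elim: k => //= k IHk.
apply: (epsilon_spec _ (fun t => ~ univalent k.+1 (extend k (bivalent_descent s k) t))).
by apply: not_all_not_ex => all_univ; apply/IHk/univalent_children => t; apply: NNPP.
Qed.

Lemma bivalent_descent_agree s k :
  agree k (fun i => bivalent_descent s i.+1 i) (bivalent_descent s k).
Proof.
elim: k => // k IHk i ik; rewrite [RHS]/= /extend.
case: ltnP => [/IHk // | ki]; have -> : i = k by lia.
by rewrite /= /extend ltnn.
Qed.

Lemma univalent_constant s1 s2 : f s1 = f s2.
Proof.
suff : univalent 0 s1 by apply.
apply: NNPP => biv0; have [r univ_r] := f_continuous (fun i => bivalent_descent s1 i.+1 i).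
apply: (bivalent_descentP (k := r) biv0); apply: univalent_agree univ_r.
by move=> i ir; symmetry; apply: bivalent_descent_agree.
Qed.

End Bivalence.

Inductive block := Root0 | RootPath | RootD.
Inductive star := Star0 | StarD | Star0D.

Section Construction.
Variables n D : nat.
Hypothesis D_gt0 : 0 < D.
Hypothesis D_le_n : D <= n.
Local Notation proc := 'I_n.+1.

Definition p0 : proc := ord0.
Definition pD : proc := inord D.

Lemma val_pD : pD = D :> nat.
Proof. by rewrite inordK. Qed.

Lemma eq_p0 (u : proc) : (u == p0) = (u == 0 :> nat).
Proof. by []. Qed.

Lemma eq_pD (u : proc) : (u == pD) = (u == D :> nat).
Proof. by rewrite -val_eqE /= val_pD. Qed.

Definition on_path (u v : proc) := [&& u <= D, v <= D & (u.+1 == v) || (v.+1 == u)].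
Definition fan_out (u v : proc) := (u <= D) && (D < v).

Definition block_root b : {set proc} :=
  match b with Root0 => [set p0] | RootPath => [set u : proc | u <= D] | RootD => [set pD] end.

Definition blocked b (v : proc) :=
  match b with RootPath => false | _ => v \in block_root b end.

(* All three blocks contain the path 0 - ... - D and edges from the path to the processes
   beyond D; Root0 (RootD) drops the path edges into 0 (into D). *)
Definition block_graph b : graph n.+1 :=
  fun u v => (u == v) || on_path u v && ~~ blocked b v || fan_out u v.

Definition star_center t : {set proc} :=
  match t with Star0 => [set p0] | StarD => [set pD] | Star0D => [set p0; pD] end.

Definition star_graph t : graph n.+1 := fun u v => (u == v) || (u \in star_center t).

Definition run b (s : nat -> star) : gseq n.+1 :=
  fun r => if r <= D then block_graph b else star_graph (s (r - D.+1)).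

Lemma block_graphE b u v : block_graph b u v =
  (u == v :> nat) || on_path u v && ~~ (match b with
      Root0 => v == 0 :> nat | RootPath => false | RootD => v == D :> nat end) || fan_out u v.
Proof. by case: b; rewrite /block_graph /= ?inE ?eq_pD ?eq_p0 -?val_eqE. Qed.

Lemma run_refl b s r u : run b s r u u.
Proof. by rewrite /run; case: ifP; rewrite /block_graph /star_graph eqxx. Qed.

Lemma run_block b s r : r <= D -> run b s r = block_graph b.
Proof. by rewrite /run => ->. Qed.

Lemma run_star b s r : D <= r -> run b s r.+1 = star_graph (s (r - D)).
Proof. by rewrite /run ltnNge subSS => ->. Qed.

Lemma run_agree b s s' k : agree k s s' -> forall r, r <= D + k -> run b s r = run b s' r.
Proof.
move=> ss' r rDk; rewrite /run; case: leqP => // Dr.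
by rewrite ss' //; lia.
Qed.

Lemma block_root_le b (q : proc) : q \in block_root b -> q <= D.
Proof. by case: b; rewrite /= !inE ?eq_p0 ?eq_pD // => /eqP->. Qed.

Lemma block_walk b s (q p : proc) : q \in block_root b -> p <= D ->
  compound (run b s) 0 (if q <= p then p - q else q - p) q p.
Proof.
move=> Rq pD'; have qD := block_root_le Rq; set k := if q <= p then _ else _.
have kD : k <= D by rewrite /k; case: (leqP q p); lia.
pose f j : proc := inord (if q <= p then q + j else q - j).
have f_val j : j <= k -> f j = (if q <= p then q + j else q - j) :> nat.
  by move=> jk; rewrite inordK //; move: jk; rewrite /k; case: (leqP q p); lia.
have f0 : f 0 = q by apply: val_inj; rewrite /= f_val // addn0 subn0 if_same.
have fk : f k = p by apply: val_inj; rewrite /= f_val // /k; case: (leqP q p); lia.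
rewrite -f0 -fk; apply: compound_walk => j jk; rewrite run_block; last lia.
rewrite block_graphE /on_path !f_val //; last exact: ltnW.
(* each step moves away from q, so it never enters the root, where edges are blocked *)
by move: Rq jk; rewrite /k; case: b; rewrite /= !inE ?eq_p0 ?eq_pD; case: (leqP q p); lia.
Qed.

Lemma block_reach b s q p : q \in block_root b -> compound (run b s) 0 D q p.
Proof.
move=> Rq; have refl := run_refl b s; have qD := block_root_le Rq.
case: (leqP p D) => [pD' | Dp].
  apply: (compound_mono refl _ (block_walk s Rq pD')).
  by case: (leqP q p); lia.
apply: (compound_mono refl D_gt0); apply: (compoundS (w := q)); first exact: eqxx.
by rewrite run_block // block_graphE /fan_out qD Dp !orbT.
Qed.

Lemma block_rooted b : rootedWith (block_graph b) (block_root b).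
Proof.
apply: (@rootedWith_intro _ _ _ (if b is RootD then pD else p0)).
- by case: b; rewrite /= !inE.
- move=> u v Ru; apply: (compound_connect (g := run b (fun=> Star0)) (a := 0) (k := D)).
    by move=> i x y /andP [_ iD]; rewrite run_block.
  exact: block_reach.
- move=> u v; rewrite block_graphE /on_path /fan_out.
  by case: b; rewrite /= !inE ?eq_p0 ?eq_pD; lia.
Qed.

Lemma star_rooted t : rootedWith (star_graph t) (star_center t).
Proof.
apply: (@rootedWith_intro _ _ _ (if t is StarD then pD else p0)).
- by case: t; rewrite /= !inE eqxx ?orbT.
- by move=> u v Cu; apply: connect1; rewrite /star_graph Cu orbT.
- by move=> u v /orP [/eqP-> | ].
Qed.

Lemma run_rooted b s r : rooted (run b s r).
Proof.
rewrite /run; case: ifP => _; [exists (block_root b); exact: block_rooted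
                              | exists (star_center (s (r - D.+1))); exact: star_rooted].
Qed.

Lemma run_diam b s : DIAM D (run b s).
Proof.
move=> r1 R r1_gt0 [_ rootedR] p; apply/subsetP => q Rq; rewrite inE.
case: (eqVneq r1 1) rootedR => [-> | r1_gt1] rootedR.
  have := rootedR 0 D_gt0; rewrite addn0 run_block //.
  move=> /(rootedWith_uniq (block_rooted b)) R_eq; rewrite {}R_eq in Rq.
  by rewrite (_ : 1 + D - 1 - (1 - 1) = D); [exact: block_reach | lia].
have last_round : r1 + D.-1 = (r1 + D.-1).-1.+1 by rewrite prednK // addn_gt0 r1_gt0.
have /rootedR : D.-1 < D by rewrite ltn_predL.
rewrite last_round run_star; last lia.
move=> /(rootedWith_uniq (star_rooted _)) R_eq; rewrite {}R_eq in Rq.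
rewrite (_ : r1 + D - 1 - (r1 - 1) = D.-1.+1); last lia.
apply: (compoundS (w := q)); first exact/compound_refl/run_refl.
rewrite (_ : r1 - 1 + D.-1.+1 = r1 + D.-1); last lia.
by rewrite last_round run_star; [rewrite /star_graph Rq orbT | lia].
Qed.

Lemma run_admissible b s x : x <= D -> EvSTABLE_first D x (run b s).
Proof.
move=> xD; have first_block : rootedBlock (run b s) (block_root b) 1 D.
  by split=> // i iD; rewrite run_block; [exact: block_rooted | lia].
split; last by exists (block_root b).
split; first by move=> r p _; exact: run_refl.
split; first by move=> r _; exact: run_rooted.
split; first by exists (block_root b), 1, D.
exact: run_diam.
Qed.

Lemma star_isolated t z : star_center t = [set z] -> forall q, star_graph t q z = (q == z).
Proof.
move=> Ct q; apply/idP/eqP => [| ->]; last by rewrite /star_graph eqxx.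
by apply: rootedWith1_in; rewrite -Ct; exact: star_rooted.
Qed.

Lemma run_isolated b t z r q :
  block_root b = [set z] -> star_center t = [set z] -> run b (fun=> t) r.+1 q z = (q == z).
Proof.
move=> Rb Ct; rewrite /run; case: ifP => _; last exact: star_isolated.
apply/idP/eqP => [| ->]; last by rewrite /block_graph eqxx.
by apply: rootedWith1_in; rewrite -Rb; exact: block_rooted.
Qed.

Section NoConsensus.
Variables (V S M : Type) (A : algorithm n.+1 V S M).
Implicit Types (I : proc -> V) (s : nat -> star).

(* By round r <= D the edge 1 -> 0, missing from Root0, has influenced only processes below r;
   afterwards D hears nobody. *)
Lemma pD_indist_Root0_RootPath I r :
  state A I (run Root0 (fun=> StarD)) r pD = state A I (run RootPath (fun=> StarD)) r pD.
Proof.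
apply: (state_eq_in_cone A (P := fun r (p : proc) => (r <= p <= D) || (p == pD))) => //.
- by move=> {}r p; rewrite eq_pD; lia.
- move=> {}r p q; rewrite eq_pD => Pp.
  case: (leqP r.+1 D) => [rD | /[!ltnS] Dr]; last by rewrite !run_star.
  by rewrite !run_block // !block_graphE (_ : (p == 0 :> nat) = false) //; lia.
- move=> {}r p q; case: (leqP r.+1 D) => [rD | /[!ltnS] Dr].
    by rewrite run_block // block_graphE /on_path /fan_out !eq_pD; lia.
  rewrite run_star // => /orP [| /eqP->]; first lia.
  by rewrite star_isolated // => /eqP->; rewrite eqxx orbT.
- by rewrite eqxx orbT.
Qed.

Lemma p0_indist_RootPath_RootD I r :
  state A I (run RootPath (fun=> Star0)) r p0 = state A I (run RootD (fun=> Star0)) r p0.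
Proof.
apply: (state_eq_in_cone A (P := fun r (p : proc) => (p + r <= D) || (p == p0))) => //.
- by move=> {}r p; rewrite eq_p0; lia.
- move=> {}r p q; rewrite eq_p0 => Pp.
  case: (leqP r.+1 D) => [rD | /[!ltnS] Dr]; last by rewrite !run_star.
  by rewrite !run_block // !block_graphE (_ : (p == D :> nat) = false) //; lia.
- move=> {}r p q; case: (leqP r.+1 D) => [rD | /[!ltnS] Dr].
    by rewrite run_block // block_graphE /on_path /fan_out !eq_p0; lia.
  rewrite run_star // => /orP [| /eqP->]; first lia.
  by rewrite star_isolated // => /eqP->; rewrite eqxx orbT.
- by rewrite eqxx orbT.
Qed.

Variables (x : nat) (v0 v1 : V).
Hypothesis x_le_D : x <= D.
Hypothesis v0_neq_v1 : v0 <> v1.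
Hypothesis A_solves : solves_consensus A (EvSTABLE_first D x).

Lemma run_consensus I b s : consensus_run A I (run b s).
Proof. exact/A_solves/run_admissible. Qed.

Definition decision I b s := epsilon (inhabits v0) (decides A I (run b s) p0).

Lemma decisionP I b s : decides A I (run b s) p0 (decision I b s).
Proof. by apply: epsilon_spec; have [term _] := run_consensus I b s; apply: term. Qed.

Lemma decides_decision I b s z w : decides A I (run b s) z w -> w = decision I b s.
Proof.
have [_ [agreement _]] := run_consensus I b s.
by move/agreement; apply; apply: decisionP.
Qed.

Lemma decision_eq_state I b s I' b' s' z :
  (forall r, state A I (run b s) r z = state A I' (run b' s') r z) ->
  decision I b s = decision I' b' s'.
Proof.
have [term _] := run_consensus I b s; have [w dec_w] := term z.
by move=> eq_z; rewrite -(decides_decision dec_w); apply/decides_decision/(decides_eq_state eq_z).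
Qed.

Lemma decision_const_input w b s : decision (fun=> w) b s = w.
Proof.
have [_ [_ validity]] := run_consensus (fun=> w) b s.
by have [q <-] := validity _ _ (decisionP (fun=> w) b s).
Qed.

Lemma decision_continuous I b s : exists r, univalent (decision I b) r s.
Proof.
have [r [dec_r before_r]] := decisionP I b s; exists r.
suff same s' : agree r s' s -> decision I b s' = decision I b s.
  by move=> s1 s2 /same-> /same->.
move=> s's; symmetry; apply: (@decides_decision _ _ _ p0); exists r.
have eq_prefix r' : r' <= r -> state A I (run b s) r' p0 = state A I (run b s') r' p0.
  move=> r'r; apply: state_eq_prefix (_ : r' <= D + r); last lia.
  by move=> r'' /andP [_]; apply: run_agree => i /s's.
by rewrite -eq_prefix //; split=> // r' r'r; rewrite -eq_prefix ?before_r // ltnW.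
Qed.

Lemma decision_swap_star I b k s t1 t2 u z :
  (forall q, star_graph t1 q z = star_graph t2 q z) -> (forall q, star_graph u q z = (q == z)) ->
  decision I b (extend k.+1 (extend k s t1) u) = decision I b (extend k.+1 (extend k s t2) u).
Proof.
set s1 := extend k.+1 _ u; set s2 := extend k.+1 _ u => same_in isolated.
have agree12 : agree k s1 s2 by move=> i ik; rewrite /s1 /s2 /extend ik ltnW.
have star_after t r : D + k <= r ->
    run b (extend k.+1 (extend k s t) u) r.+1 = star_graph (if r - D == k then t else u).
  by move=> Dkr; rewrite run_star ?extend_extend_ge //; lia.
apply: (decision_eq_state (z := z)) => r.
apply: (state_eq_in_cone A (P := fun r p => (r <= D + k) || (p == z))) => //.
- by move=> {}r p /orP [/ltnW -> | ->]; rewrite ?orbT.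
- move=> {}r p q; case: (leqP r.+1 (D + k)) => [rDk _ | /[!ltnS] Dkr /= /eqP->].
    by rewrite (run_agree _ agree12).
  by rewrite !star_after //; case: eqP.
- move=> {}r p q; case: (leqP r.+1 (D + k)) => [/ltnW -> // | /[!ltnS] Dkr /= /eqP->].
  rewrite star_after //.
  by case: eqP => [rk _ | _]; [apply/orP; left; lia | rewrite isolated orbC => ->].
- by rewrite eqxx orbT.
Qed.

Lemma decision_univalent_children I b k s :
  (forall t, univalent (decision I b) k.+1 (extend k s t)) -> univalent (decision I b) k s.
Proof.
move=> children; pose c t u := extend k.+1 (extend k s t) u.
have child t u s' : agree k s' s -> s' k = t -> decision I b s' = decision I b (c t u).
  move=> s's s'k; apply: children; last exact: agree_extend.
  move=> i; rewrite ltnS leq_eqVlt => /orP [/eqP-> | ik]; rewrite /extend ?ltnn // ik.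
  exact: s's.
have same_at_pD q : star_graph Star0 q pD = star_graph Star0D q pD.
  by rewrite /star_graph /= !inE; case: (q == pD); rewrite ?orbT ?orbF.
have same_at_p0 q : star_graph StarD q p0 = star_graph Star0D q p0.
  by rewrite /star_graph /= !inE; case: (q == p0).
have isolated_pD := star_isolated (t := StarD) (z := pD) erefl.
have isolated_p0 := star_isolated (t := Star0) (z := p0) erefl.
have via_Star0D s' : agree k s' s -> decision I b s' = decision I b (c Star0D Star0).
  move=> s's; case s'k: (s' k).
  - rewrite (child _ StarD _ s's s'k) (decision_swap_star _ _ _ _ same_at_pD isolated_pD).
    by apply: children; apply: agree_extend.
  - by rewrite (child _ Star0 _ s's s'k) (decision_swap_star _ _ _ _ same_at_p0 isolated_p0).
  - exact: child.
by move=> s1 s2 /via_Star0D-> /via_Star0D->.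
Qed.

Lemma decision_constant I b s s' : decision I b s = decision I b s'.
Proof.
exact: (univalent_constant (decision_continuous I b) (@decision_univalent_children I b)).
Qed.

Lemma no_consensus : False.
Proof.
pose J (p : proc) := if p == p0 then v0 else v1.
have pD_neq_p0 : (pD == p0) = false by rewrite eq_p0 val_pD; lia.
have dec_v0 : decision J Root0 (fun=> Star0) = v0.
  rewrite -(decision_const_input v0 Root0 (fun=> Star0)).
  by apply: (decision_eq_state (z := p0)); apply: state_eq_isolated => *;
    rewrite ?run_isolated // /J eqxx.
have dec_v1 : decision J RootD (fun=> StarD) = v1.
  rewrite -(decision_const_input v1 RootD (fun=> StarD)).
  by apply: (decision_eq_state (z := pD)); apply: state_eq_isolated => *;
    rewrite ?run_isolated // /J pD_neq_p0.
(* Root0/Star0 ~ Root0/StarD ~ RootPath/StarD ~ RootPath/Star0 ~ RootD/Star0 ~ RootD/StarD *)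
apply: v0_neq_v1; rewrite -dec_v0 -dec_v1 (decision_constant _ _ _ (fun=> StarD)).
rewrite (decision_eq_state (pD_indist_Root0_RootPath J)).
rewrite (decision_constant _ _ _ (fun=> Star0)).
rewrite (decision_eq_state (p0_indist_RootPath_RootD J)).
exact: decision_constant.
Qed.

End NoConsensus.
End Construction.

Theorem theorem2 (n D x : nat) :
  1 <= D <= n - 1 -> 1 <= x <= D ->
  forall (V : Type), (exists v0 v1 : V, v0 <> v1) ->
  (~ exists (S M : Type) (A : algorithm n V S M),
       solves_consensus A (EvSTABLE D x)) /\
  (~ exists (S M : Type) (A : algorithm n V S M),
       solves_consensus A (EvSTABLE_first D x)).
Proof.
move=> /andP [D_gt0 D_lt_n] /andP [_ x_le_D] V [v0 [v1 v0_neq_v1]].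
suff no_first : ~ exists (S M : Type) (A : algorithm n V S M),
    solves_consensus A (EvSTABLE_first D x).
  split=> // - [S [M [A A_solves]]]; apply: no_first; exists S, M, A.
  by move=> I g [admissible _]; apply: A_solves.
case: n D_lt_n => [|n] D_lt_n [S [M [A A_solves]]]; first lia.
have D_le_n : D <= n by lia.
exact: (no_consensus D_gt0 D_le_n x_le_D v0_neq_v1 A_solves).
Qed.
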